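(* Let $X$ be a set and let $\mathscr{A}$ be a non-empty family of subsets of $X$ which is closed under finite intersections. Then $$\mathscr{L}_1(\mathscr{A}) := \{d \in \mathscr{P}(X) : d \text{ is bounded on } A \times A \text{ for some } A \in \mathscr{A}\}$$ is a Lipschitz structure for $X$.
   Context: $\mathscr{P}(X)$ denotes the family of all pseudo-metrics on $X$ (symmetric maps $d: X\times X \to [0,\infty)$ satisfying the triangle inequality and vanishing on the whole diagonal). A Lipschitz structure for $X$ is a non-empty family $\mathscr{L}$ of pseudo-metrics on $X$ such that: (L1) if $d$ is a pseudo-metric on $X$ with $d \le d_1$ for some $d_1 \in \mathscr{L}$, then $d \in \mathscr{L}$; (L2) if $d \in \mathscr{L}$ then $\alpha d \in \mathscr{L}$ for every real $\alpha>0$; (L3) if $d_1,d_2 \in \mathscr{L}$ then $d_1 \vee d_2$ (pointwise maximum) belongs to $\mathscr{L}$. *)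

From Stdlib Require Import Reals.
Open Scope R_scope.

Definition pseudo_metric {X : Type} (d : X -> X -> R) : Prop :=
  (forall x y, 0 <= d x y) /\
  (forall x, d x x = 0) /\
  (forall x y, d x y = d y x) /\
  (forall x y z, d x z <= d x y + d y z).

Definition lipschitz_structure {X : Type} (L : (X -> X -> R) -> Prop) : Prop :=
  (forall d, L d -> pseudo_metric d) /\
  (exists d, L d) /\
  (forall d d1, pseudo_metric d -> L d1 -> (forall x y, d x y <= d1 x y) -> L d) /\
  (forall d (alpha : R), L d -> 0 < alpha -> L (fun x y => alpha * d x y)) /\
  (forall d1 d2, L d1 -> L d2 -> L (fun x y => Rmax (d1 x y) (d2 x y))).

Definition bounded_on {X : Type} (d : X -> X -> R) (A : X -> Prop) : Prop :=
  exists M : R, forall x y, A x -> A y -> d x y <= M.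

Definition L1 {X : Type} (AA : (X -> Prop) -> Prop) (d : X -> X -> R) : Prop :=
  pseudo_metric d /\ exists A, AA A /\ bounded_on d A.

From Stdlib Require Import Reals Lra.

Lemma pseudo_metric_zero {X : Type} : pseudo_metric (fun _ _ : X => 0).
Proof. repeat split; intros; lra. Qed.

Lemma pseudo_metric_scale {X : Type} (d : X -> X -> R) (a : R) :
  pseudo_metric d -> 0 <= a -> pseudo_metric (fun x y => a * d x y).
Proof.
  intros [Hpos [Hdiag [Hsym Htri]]] Ha; repeat split.
  - intros x y; apply Rmult_le_pos; auto.
  - intros x; rewrite Hdiag; ring.
  - intros x y; rewrite Hsym; reflexivity.
  - intros x y z; rewrite <- Rmult_plus_distr_l.
    apply Rmult_le_compat_l; auto.
Qed.

Lemma pseudo_metric_max {X : Type} (d1 d2 : X -> X -> R) :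
  pseudo_metric d1 -> pseudo_metric d2 ->
  pseudo_metric (fun x y => Rmax (d1 x y) (d2 x y)).
Proof.
  intros [Hpos1 [Hdiag1 [Hsym1 Htri1]]] [_ [Hdiag2 [Hsym2 Htri2]]]; repeat split.
  - intros x y; apply Rle_trans with (d1 x y); [apply Hpos1 | apply Rmax_l].
  - intros x; rewrite Hdiag1, Hdiag2; apply Rmax_left, Rle_refl.
  - intros x y; rewrite Hsym1, Hsym2; reflexivity.
  - intros x y z; apply Rmax_lub.
    + apply Rle_trans with (1 := Htri1 x y z).
      apply Rplus_le_compat; apply Rmax_l.
    + apply Rle_trans with (1 := Htri2 x y z).
      apply Rplus_le_compat; apply Rmax_r.
Qed.

Lemma bounded_on_le {X : Type} (d d1 : X -> X -> R) (A : X -> Prop) :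
  (forall x y, d x y <= d1 x y) -> bounded_on d1 A -> bounded_on d A.
Proof.
  intros Hle [M HM]; exists M; intros x y Hx Hy.
  apply Rle_trans with (d1 x y); auto.
Qed.

Lemma bounded_on_subset {X : Type} (d : X -> X -> R) (A B : X -> Prop) :
  (forall x, B x -> A x) -> bounded_on d A -> bounded_on d B.
Proof. intros HBA [M HM]; exists M; auto. Qed.

Lemma bounded_on_scale {X : Type} (d : X -> X -> R) (A : X -> Prop) (a : R) :
  0 <= a -> bounded_on d A -> bounded_on (fun x y => a * d x y) A.
Proof.
  intros Ha [M HM]; exists (a * M); intros x y Hx Hy.
  apply Rmult_le_compat_l; auto.
Qed.

Lemma bounded_on_max {X : Type} (d1 d2 : X -> X -> R) (A : X -> Prop) :
  bounded_on d1 A -> bounded_on d2 A ->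
  bounded_on (fun x y => Rmax (d1 x y) (d2 x y)) A.
Proof.
  intros [M HM] [N HN]; exists (Rmax M N); intros x y Hx Hy.
  apply Rmax_lub.
  - apply Rle_trans with M; [auto | apply Rmax_l].
  - apply Rle_trans with N; [auto | apply Rmax_r].
Qed.

Section L1_closure.

Variables (X : Type) (AA : (X -> Prop) -> Prop).

Lemma L1_zero : (exists A, AA A) -> L1 AA (fun _ _ : X => 0).
Proof.
  intros [A HA]; split; [apply pseudo_metric_zero |].
  exists A; split; [exact HA |]; exists 0; intros; apply Rle_refl.
Qed.

Lemma L1_le (d d1 : X -> X -> R) :
  pseudo_metric d -> L1 AA d1 -> (forall x y, d x y <= d1 x y) -> L1 AA d.
Proof.
  intros Hd [_ [A [HA Hb]]] Hle; split; [exact Hd |].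
  exists A; split; [exact HA | exact (bounded_on_le d d1 A Hle Hb)].
Qed.

Lemma L1_scale (d : X -> X -> R) (a : R) :
  L1 AA d -> 0 < a -> L1 AA (fun x y => a * d x y).
Proof.
  intros [Hd [A [HA Hb]]] Ha.
  split; [apply pseudo_metric_scale; [exact Hd | lra] |].
  exists A; split; [exact HA |]; apply bounded_on_scale; [lra | exact Hb].
Qed.

Lemma L1_max (d1 d2 : X -> X -> R) :
  (forall A B, AA A -> AA B -> AA (fun x => A x /\ B x)) ->
  L1 AA d1 -> L1 AA d2 -> L1 AA (fun x y => Rmax (d1 x y) (d2 x y)).
Proof.
  intros Hcap [Hd1 [A [HA Hb1]]] [Hd2 [B [HB Hb2]]].
  split; [apply pseudo_metric_max; assumption |].
  exists (fun x => A x /\ B x); split; [apply Hcap; assumption |].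
  apply bounded_on_max.
  - apply bounded_on_subset with A; [tauto | exact Hb1].
  - apply bounded_on_subset with B; [tauto | exact Hb2].
Qed.

End L1_closure.

Theorem theorem3p1 (X : Type) (AA : (X -> Prop) -> Prop)
  (Hne : exists A, AA A)
  (Hcap : forall A B, AA A -> AA B -> AA (fun x => A x /\ B x)) :
  lipschitz_structure (L1 AA).
Proof.
  split; [| split; [| split; [| split]]].
  - intros d [Hd _]; exact Hd.
  - exists (fun _ _ => 0); exact (L1_zero X AA Hne).
  - exact (L1_le X AA).
  - exact (L1_scale X AA).
  - intros d1 d2; exact (L1_max X AA d1 d2 Hcap).
Qed.
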